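(* The filtration $F^\bullet(A/\!/E(1))_*$ is multiplicative: $F^i(A/\!/E(1))_*\cdot F^j(A/\!/E(1))_*\subseteq F^{i+j}(A/\!/E(1))_*$ for all $i,j$. Thus the associated graded $E^0(A/\!/E(1))_*=\bigoplus_jF^j/F^{j+1}$ is an $E(2)_*$-comodule algebra.
   Context: Let $p$ be an odd prime. In the mod $p$ dual Steenrod algebra let $\zeta_n,\overline{\tau}_n$ be the conjugates of Milnor's $\xi_n,\tau_n$. Let $(A/\!/E(1))_*=\mathbb{F}_p[\zeta_1,\zeta_2,\ldots]\otimes E(\overline{\tau}_2,\overline{\tau}_3,\ldots)$ and $(A/\!/E(2))_*=\mathbb{F}_p[\zeta_1,\ldots]\otimes E(\overline{\tau}_3,\ldots)$, comodule algebras over $E(2)_*=E(\overline{\tau}_0,\overline{\tau}_1,\overline{\tau}_2)$ via the coproduct of the dual Steenrod algebra. Weight: $\mathrm{wt}(\zeta_k)=\mathrm{wt}(\overline{\tau}_k)=p^k$, additive on products. Every monomial of $(A/\!/E(1))_*$ is uniquely $m\overline{\tau}_2^{\epsilon}$ with $m$ a monomial of $(A/\!/E(2))_*$ and $\epsilon\in\{0,1\}$. Let $F^j(A/\!/E(1))_*$ be the span of the monomials $m\overline{\tau}_2^\epsilon$ with $\mathrm{wt}(m)\geq pj$ (equivalently $F^j=\kappa^{-1}(\bigoplus_{k\ge j}M_2(k)\otimes E(\overline{\tau}_2))$ where $\kappa(m\overline{\tau}_2^\epsilon)=m\otimes\overline{\tau}_2^\epsilon$ and $M_2(k)$ is the span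 of monomials of $(A/\!/E(2))_*$ of weight $pk$); this is a decreasing filtration by $E(2)_*$-subcomodules. *)

From HB Require Import structures.
From mathcomp Require Import all_boot all_order all_algebra.
From mathcomp Require Import finmap.
Set Implicit Arguments. Unset Strict Implicit. Unset Printing Implicit Defensive.
Import GRing.Theory.
Local Open Scope fset_scope.

(* Concrete model of (A//E(1))_* = F_p[zeta_1,zeta_2,...] (x) E(taubar_2,taubar_3,...).
   A monomial is a pair (z, T):
   - z : finitely supported exponent map; z k is the exponent of zeta_{k+1};
   - T : finite set of indices; k \in T means taubar_{k+2} occurs
     (exterior generators, written in increasing order of index).
   So k = 0 in T is taubar_2; the monomial m taubar_2^eps of the paper has
   m = (z, T :\ 0) and eps = (0 \in T). *)
Definition Mon : Type := ({fsfun nat -> nat for fun => 0%N} * {fset nat})%type.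

Definition zmul (z1 z2 : {fsfun nat -> nat for fun => 0%N})
  : {fsfun nat -> nat for fun => 0%N} :=
  [fsfun k in (finsupp z1 `|` finsupp z2) => (z1 k + z2 k)%N].

(* weight of the (A//E(2))_*-part m of a monomial m taubar_2^eps:
   wt(zeta_k) = wt(taubar_k) = p^k, additive, taubar_2 excluded. *)
Definition wtE2 (p : nat) (m : Mon) : nat :=
  (\sum_(k <- finsupp m.1) m.1 k * p ^ k.+1
   + \sum_(k <- m.2 | k != 0%N) p ^ k.+2)%N.

(* number of transpositions needed to merge two increasing exterior words *)
Definition ninv (S T : {fset nat}) : nat :=
  (\sum_(s <- S) \sum_(t <- T) (t < s))%N.

(* Elements of the algebra: formal F_p-linear combinations of monomials,
   identified through their coefficient functions [coef]. *)
Definition Elt (p : nat) : Type := seq ('F_p * Mon).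

Definition coef (p : nat) (x : Elt p) (w : Mon) : 'F_p :=
  (\sum_(c <- x | c.2 == w) c.1)%R.

(* graded-commutative product: zeta's central (even degree), taubar's
   anticommute and square to zero (odd degree). *)
Definition Amul (p : nat) (x y : Elt p) : Elt p :=
  flatten [seq (if (a.2.2 `&` b.2.2 == fset0)
                then [:: (((-1) ^+ ninv a.2.2 b.2.2 * a.1 * b.1)%R,
                          (zmul a.2.1 b.2.1, a.2.2 `|` b.2.2))]
                else [::])
          | a <- x, b <- y].

(* F^j (A//E(1))_* : span of the monomials m taubar_2^eps with wt(m) >= p j,
   i.e. elements all of whose monomials with nonzero coefficient qualify. *)
Definition AinF (p j : nat) (x : Elt p) : Prop :=
  forall w : Mon, coef x w != 0%R -> (p * j <= wtE2 p w)%N.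
Arguments AinF : clear implicits.
Arguments Amul : clear implicits.

(* The coefficient of a monomial w in x * y is a sum, over pairs (u, v) of
   monomials occurring in x and y whose product is +-w, of coef x u * coef y v.
   The weight is additive on such products: the zeta-exponents add and the
   taubar-sets are disjoint.  So every w occurring in x * y has weight at
   least p i + p j. *)
From mathcomp Require Import all_boot all_order all_algebra.
From mathcomp Require Import finmap.

Set Implicit Arguments.
Unset Strict Implicit.
Unset Printing Implicit Defensive.
Import GRing.Theory.
Local Open Scope fset_scope.

Lemma big_fsetU_disjoint (R : Type) (idx : R) (op : Monoid.com_law idx)
    (I : choiceType) (A B : {fset I}) (P : pred I) (F : I -> R) :
  A `&` B = fset0 ->
  \big[op/idx]_(i <- A `|` B | P i) F i =
    op (\big[op/idx]_(i <- A | P i) F i) (\big[op/idx]_(i <- B | P i) F i).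
Proof.
move=> /fsetP disAB; rewrite -big_cat; apply: perm_big; apply: uniq_perm.
- exact: fset_uniq.
- rewrite cat_uniq !fset_uniq /= andbT; apply/hasPn => k kB.
  by apply/negP => kA; move: (disAB k); rewrite !inE kA kB.
- by move=> k; rewrite mem_cat !inE.
Qed.

Lemma sum_finsupp_incl (z : {fsfun nat -> nat for fun => 0%N}) (B : {fset nat})
    (c : nat -> nat) :
  finsupp z `<=` B ->
  (\sum_(k <- finsupp z) z k * c k = \sum_(k <- B) z k * c k)%N.
Proof. by move=> zB; apply: big_fset_incl => // k _ kNz; rewrite fsfun_dflt. Qed.

Lemma sum_finsupp_zmul (z1 z2 : {fsfun nat -> nat for fun => 0%N}) (c : nat -> nat) :
  (\sum_(k <- finsupp (zmul z1 z2)) zmul z1 z2 k * c k =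
   \sum_(k <- finsupp z1) z1 k * c k + \sum_(k <- finsupp z2) z2 k * c k)%N.
Proof.
set B := finsupp z1 `|` finsupp z2.
have zB : finsupp (zmul z1 z2) `<=` B.
  by apply/fsubsetP => k; rewrite mem_finsupp /zmul fsfunE; case: ifP.
rewrite (@sum_finsupp_incl _ B _ zB) (@sum_finsupp_incl z1 B) ?fsubsetUl //.
rewrite (@sum_finsupp_incl z2 B) ?fsubsetUr // -big_split big_seq [RHS]big_seq.
by apply: eq_bigr => k kB; rewrite /zmul fsfunE kB mulnDl.
Qed.

Lemma wtE2_mul p (u v : Mon) : u.2 `&` v.2 = fset0 ->
  wtE2 p (zmul u.1 v.1, u.2 `|` v.2) = (wtE2 p u + wtE2 p v)%N.
Proof.
by move=> disuv; rewrite /wtE2 /= sum_finsupp_zmul big_fsetU_disjoint //= addnACA.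
Qed.

Definition mulmon_coef (p : nat) (w u v : Mon) : 'F_p :=
  if (u.2 `&` v.2 == fset0) && ((zmul u.1 v.1, u.2 `|` v.2) == w)
  then ((-1) ^+ ninv u.2 v.2)%R else 0%R.

Lemma coef_Amul p (x y : Elt p) (w : Mon) :
  coef (Amul p x y) w =
  (\sum_(a <- x) \sum_(b <- y) mulmon_coef p w a.2 b.2 * a.1 * b.1)%R.
Proof.
rewrite /coef /Amul big_flatten /= big_allpairs_dep /=.
apply: eq_bigr => a _; apply: eq_bigr => b _; rewrite /mulmon_coef.
case: ifP => _; last by rewrite big_nil /= !mul0r.
by rewrite big_cons big_nil addr0 /=; case: eqP => //= _; rewrite !mul0r.
Qed.

Lemma big_entries_coef p (s : Elt p) (G : Mon -> 'F_p) :
  (\sum_(a <- s) G a.2 * a.1 = \sum_(u <- undup (unzip2 s)) G u * coef s u)%R.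
Proof.
rewrite /coef; under [RHS]eq_bigr => u _ do rewrite mulr_sumr big_mkcond /=.
rewrite exchange_big /= big_seq [RHS]big_seq; apply: eq_bigr => a ain.
rewrite (bigD1_seq a.2) ?undup_uniq ?mem_undup ?map_f //= eqxx big1 ?addr0 //.
by move=> u /negPf ua; rewrite eq_sym ua.
Qed.

Lemma coef_Amul_monomials p (x y : Elt p) (w : Mon) :
  coef (Amul p x y) w =
  (\sum_(u <- undup (unzip2 x)) \sum_(v <- undup (unzip2 y))
      mulmon_coef p w u v * coef y v * coef x u)%R.
Proof.
rewrite coef_Amul.
transitivity (\sum_(a <- x) (\sum_(v <- undup (unzip2 y))
                 mulmon_coef p w a.2 v * coef y v) * a.1)%R.
  apply: eq_bigr => a _; rewrite -big_entries_coef mulr_suml.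
  by apply: eq_bigr => b _; rewrite mulrAC.
rewrite (big_entries_coef x (fun u =>
  \sum_(v <- undup (unzip2 y)) mulmon_coef p w u v * coef y v)%R).
by apply: eq_bigr => u _; rewrite mulr_suml.
Qed.

Lemma coef_Amul_neq0 p (x y : Elt p) (R : pred Mon) :
  (forall u v, coef x u != 0%R -> coef y v != 0%R -> u.2 `&` v.2 = fset0 ->
     R (zmul u.1 v.1, u.2 `|` v.2)) ->
  forall w, coef (Amul p x y) w != 0%R -> R w.
Proof.
move=> Rprod w; apply: contraNT => NRw; rewrite coef_Amul_monomials.
apply/eqP/big1 => u _; apply/big1 => v _.
have [->|xu] := eqVneq (coef x u) 0%R; first by rewrite mulr0.
have [->|yv] := eqVneq (coef y v) 0%R; first by rewrite mulr0 mul0r.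
rewrite /mulmon_coef; case: ifP => [/andP[/eqP disuv /eqP ew]|]; last by rewrite !mul0r.
by move: NRw; rewrite -ew Rprod.
Qed.

Theorem mainTheorem15 (p : nat) (p_prime : prime p) (p_odd : odd p)
  (i j : nat) (x y : Elt p) :
  AinF p i x -> AinF p j y -> AinF p (i + j) (Amul p x y).
Proof.
move=> xFi yFj; apply: (coef_Amul_neq0 (R := fun w => p * (i + j) <= wtE2 p w)).
by move=> u v xu yv disuv; rewrite /= wtE2_mul // mulnDr leq_add ?xFi ?yFj.
Qed.
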